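(* Let ${\tt G}$ be a digraph with a fixed total order on its vertices, $R$ a commutative unital ring, $A$ a unital associative $R$-algebra and $M$ an $(A,A)$-bimodule. Setting $\mathcal F_{A,M}({\tt H}\preceq{\tt H}')$ to be the composite of the covering maps along any chain ${\tt H}={\tt H}_0\prec{\tt H}_1\prec\dots\prec{\tt H}_m={\tt H}'$ (and the identity when ${\tt H}={\tt H}'$) is well defined, and $\mathcal F_{A,M}\colon\mathbf P({\tt G})\to R\text{-}\mathbf{Mod}$ is a covariant functor.
   Context: A digraph ${\tt G}=(V,E)$ has finite $V$ and $E\subseteq(V\times V)\setminus\{(v,v)\}$; $s(e),t(e)$ are source and target of $e$. A multipath is a spanning subgraph (all vertices, subset of edges) each of whose components (of the underlying undirected graph) is an isolated vertex or a simple directed path. $P({\tt G})$ is the set of multipaths ordered by inclusion of edge sets, ${\tt H}\prec{\tt H}\cup e$ the covering relation (add one edge), and $\mathbf P({\tt G})$ the category with a unique morphism ${\tt H}\to{\tt H}'$ iff ${\tt H}\le{\tt H}'$. For a multipath ${\tt H}$ with components $c_0<\dots<c_k$ ordered by minimal vertex, $\mathcal F_{A,M}({\tt H})=M\otimes_R A\otimes_R\cdots\otimes_R A$ (factor $M$ for $c_0$, factor $A$ for $c_1,\dots,c_k$). For ${\tt H}\prec{\tt H}\cup e$ let $s,t$ be the indices of the components of ${\tt H}$ containing $s(e),t(e)$ (so $s\neq t$); the components of ${\tt H}\cup e$ are those of ${\tt H}$ with $c_s,c_t$ merged into one component placed at position $\min(s,t)$, the others keeping their order, and the covering map $\mathcal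 F_{A,M}({\tt H}\prec{\tt H}\cup e)$ sends $a_0\otimes\cdots\otimes a_k$ to the tensor obtained by replacing $a_s,a_t$ with the single factor $a_s\cdot a_t$ (algebra product or bimodule action) in position $\min(s,t)$. *)

From HB Require Import structures.
From mathcomp Require Import all_boot all_order all_algebra.
From Stdlib Require Import ClassicalEpsilon.

Set Implicit Arguments.
Unset Strict Implicit.
Unset Printing Implicit Defensive.

Import GRing.Theory.
Local Open Scope ring_scope.

(* Digraphs on the totally ordered vertex set 'I_n (order = nat order) *)

Definition digraph (n : nat) (E : {set 'I_n * 'I_n}) : Prop :=
  forall v : 'I_n, (v, v) \notin E.

Definition uadj (n : nat) (H : {set 'I_n * 'I_n}) : rel 'I_n :=
  fun u v => ((u, v) \in H) || ((v, u) \in H).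

(* H is a multipath of G = (V,E): a spanning subgraph all of whose
   (undirected) components are an isolated vertex or a simple directed
   path: the component of x is the vertex set of a duplicate-free
   sequence p, and the edges of H in it are exactly the consecutive
   pairs of p. *)
Definition multipath (n : nat) (E H : {set 'I_n * 'I_n}) : Prop :=
  H \subset E /\
  forall x : 'I_n, exists p : seq 'I_n,
    [/\ uniq p,
        (forall y, (y \in p) = connect (uadj H) x y) &
        (forall e : 'I_n * 'I_n, e.1 \in p -> (e \in H) = (e \in zip p (behead p)))].

Definition is_root (n : nat) (H : {set 'I_n * 'I_n}) (u : 'I_n) : bool :=
  [forall w, connect (uadj H) u w ==> (u <= w)%N].

Definition ncomp (n : nat) (H : {set 'I_n * 'I_n}) : nat :=
  #|[set u | is_root H u]|.

(* index (0-based, components ordered by minimal vertex) of the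
   component containing v *)
Definition comp_index (n : nat) (H : {set 'I_n * 'I_n}) (v : 'I_n) : nat :=
  #|[set u | is_root H u & [forall w, connect (uadj H) v w ==> (u < w)%N]]|.

Record bimodule (R : comNzRingType) (A : algType R) := Bimodule {
  bm_car : lmodType R;
  lact : A -> bm_car -> bm_car;
  ract : bm_car -> A -> bm_car;
  lactA : forall a b m, lact a (lact b m) = lact (a * b) m;
  lact1 : forall m, lact 1 m = m;
  ractA : forall m a b, ract (ract m a) b = ract m (a * b);
  ract1 : forall m, ract m 1 = m;
  lact_ract : forall a m b, ract (lact a m) b = lact a (ract m b);
  lact_linl : forall r a b m, lact (r *: a + b) m = r *: lact a m + lact b m;
  lact_linr : forall r a m m', lact a (r *: m + m') = r *: lact a m + lact a m';
  ract_linl : forall r m m' a, ract (r *: m + m') a = r *: ract m a + ract m' a;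
  ract_linr : forall r m a b, ract m (r *: a + b) = r *: ract m a + ract m b
}.

(* Tensor products M (x)_R A (x)_R ... (x)_R A  (k factors A),        *)
(* given by their universal property                                 *)

Definition is_linear (R : comNzRingType) (U W : lmodType R) (g : U -> W) : Prop :=
  forall (r : R) (x y : U), g (r *: x + y) = r *: g x + g y.

Definition fupd (k : nat) (T : Type) (f : {ffun 'I_k -> T}) (i : 'I_k) (x : T) :
  {ffun 'I_k -> T} := [ffun j => if j == i then x else f j].

Definition multilinear (R : comNzRingType) (M A W : lmodType R) (k : nat)
  (f : M -> {ffun 'I_k -> A} -> W) : Prop :=
  (forall as_, is_linear (fun m => f m as_)) /\
  (forall m as_ i, is_linear (fun x => f m (fupd as_ i x))).

Record tensor_power (R : comNzRingType) (M A : lmodType R) (k : nat) := TensorPower {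
  tp_car : lmodType R;
  tp_tens : M -> {ffun 'I_k -> A} -> tp_car;
  tp_multilinear : multilinear tp_tens;
  tp_universal : forall (W : lmodType R) (f : M -> {ffun 'I_k -> A} -> W),
    multilinear f ->
    exists g : tp_car -> W,
      [/\ is_linear g, (forall m as_, g (tp_tens m as_) = f m as_) &
          forall g' : tp_car -> W, is_linear g' ->
            (forall m as_, g' (tp_tens m as_) = f m as_) -> g' =1 g]
}.

Section Functor.
Variables (R : comNzRingType) (A : algType R) (M : bimodule A).
Variable tf : forall k : nat, tensor_power (bm_car M) A k.
Variable n : nat.

(* F_{A,M}(H) = M (x) A^{(x) k}, where H has k+1 components *)
Definition Fobj (H : {set 'I_n * 'I_n}) : lmodType R := tp_car (tf (ncomp H).-1).

Definition ftoseq (k : nat) (as_ : {ffun 'I_k -> A}) : seq A := [seq as_ i | i <- enum 'I_k].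
Definition seqtof (k : nat) (l : seq A) : {ffun 'I_k -> A} := [ffun j : 'I_k => nth 0 l j].

Definition rem_nth (T : Type) (i : nat) (l : seq T) : seq T := take i l ++ drop i.+1 l.

(* the pure tensor m (x) a_1 (x) ... (x) a_k, with factors indexed 0..k
   (factor 0 in M); replace a_s, a_t by a_s . a_t at position min(s,t) *)
Definition merge (s t : nat) (m : bm_car M) (l : seq A) : bm_car M * seq A :=
  if s == 0%N then (ract m (nth 0 l t.-1), rem_nth t.-1 l)
  else if t == 0%N then (lact (nth 0 l s.-1) m, rem_nth s.-1 l)
  else (m, rem_nth (maxn s t).-1
                   (set_nth 0 l (minn s t).-1 (nth 0 l s.-1 * nth 0 l t.-1))).

Definition cover_spec (H : {set 'I_n * 'I_n}) (e : 'I_n * 'I_n)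
  (g : Fobj H -> Fobj (e |: H)) : Prop :=
  is_linear g /\
  forall m as_,
    g (tp_tens (tf (ncomp H).-1) m as_) =
    let: (m', l') := merge (comp_index H e.1) (comp_index H e.2) m (ftoseq as_) in
    tp_tens (tf (ncomp (e |: H)).-1) m' (seqtof _ l').

Definition cover_map (H : {set 'I_n * 'I_n}) (e : 'I_n * 'I_n) : Fobj H -> Fobj (e |: H) :=
  epsilon (inhabits (fun _ => 0)) (cover_spec (e := e)).

(* a chain H = H_0 < H_1 < ... < H_m described by the added edges *)
Definition chain_end (H : {set 'I_n * 'I_n}) (es : seq ('I_n * 'I_n)) :=
  foldl (fun H e => e |: H) H es.

Fixpoint is_chain (E H : {set 'I_n * 'I_n}) (es : seq ('I_n * 'I_n)) : Prop :=
  match es with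
  | [::] => multipath E H
  | e :: es' => [/\ multipath E H, e \notin H & is_chain E (e |: H) es']
  end.

Fixpoint chain_comp (H : {set 'I_n * 'I_n}) (es : seq ('I_n * 'I_n)) :
  Fobj H -> Fobj (chain_end H es) :=
  match es return Fobj H -> Fobj (chain_end H es) with
  | [::] => fun x => x
  | e :: es' => fun x => chain_comp es' (cover_map e x)
  end.

End Functor.

(* A pure tensor over a multipath H is described by a state: an element m of M
   together with a labelling of the vertices by elements of A that is constant
   on the components of H.  A covering map H < H u e acts on states by
   multiplying the labels of the two merged components, or by absorbing the
   label into m when one of them is the component of the minimal vertex.  If
   two edges e, f can both be added to H, they cannot leave the same component,
   enter the same component, or join two components both ways, since the result
   is again a multipath; hence adding them in either order yields the same
   state, by associativity.  A diamond-lemma induction then shows that all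
   chains from H to H' act in the same way on states.  Linear maps agreeing on
   pure tensors are equal, so all chain composites coincide, and functoriality
   follows by concatenating chains. *)

From Pilot Require Import Defs.
From mathcomp Require Import all_boot all_order all_algebra zify.
From Stdlib Require Import ClassicalEpsilon FunctionalExtensionality.

Set Implicit Arguments.
Unset Strict Implicit.
Unset Printing Implicit Defensive.

Import GRing.Theory.

Local Notation merge := Defs.merge.

(** * Components of a subgraph *)

Section Components.
Variable n : nat.
Implicit Types (H : {set 'I_n * 'I_n}) (e : 'I_n * 'I_n) (u v w x y r : 'I_n).
Local Notation conn H := (connect (uadj H)).

Lemma uadj_sym H : symmetric (uadj H).
Proof. by move=> u v; rewrite /uadj orbC. Qed.

Lemma conn_sym H : connect_sym (uadj H).
Proof. exact/sym_connect_sym/uadj_sym. Qed.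

Lemma conn_ind H (P : pred 'I_n) x y :
  (forall u v, uadj H u v -> P u -> P v) -> P x -> conn H x y -> P y.
Proof.
move=> clP Px xy; have clP' : closed (uadj H) P.
  by apply: (intro_closed (conn_sym H)) => u v /clP.
by have := closed_connect clP' xy; rewrite /in_mem /= => <-.
Qed.

Lemma conn_subset H H' x y : H \subset H' -> conn H x y -> conn H' x y.
Proof.
move=> sHH'; apply: connect_sub => u v uv; apply: connect1; move: uv.
by rewrite /uadj => /orP[] /(subsetP sHH') ->; rewrite ?orbT.
Qed.

Definition root_of H x : 'I_n := [arg min_(w < x | conn H x w) val w].

Lemma conn_root_of H x : conn H x (root_of H x).
Proof. by rewrite /root_of; case: arg_minnP => //; apply: connect0. Qed.

Lemma root_of_min H x w : conn H x w -> root_of H x <= w.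
Proof. by rewrite /root_of; case: arg_minnP => [|r _ r_min /r_min] //; apply: connect0. Qed.

Lemma root_of_le H x : root_of H x <= x.
Proof. exact/root_of_min/connect0. Qed.

Lemma root_of_eq H x r :
  conn H x r -> (forall w, conn H x w -> r <= w) -> root_of H x = r.
Proof.
move=> xr r_min; apply/val_inj/eqP.
by rewrite eqn_leq root_of_min // r_min // conn_root_of.
Qed.

Lemma connE H x y : conn H x y = (root_of H x == root_of H y).
Proof.
apply/idP/eqP => [xy | eq_r].
  apply: root_of_eq => [|w xw]; first exact: connect_trans xy (conn_root_of H y).
  by apply: root_of_min; apply: connect_trans xw; rewrite conn_sym.
apply: connect_trans (conn_root_of H x) _.
by rewrite eq_r conn_sym conn_root_of.
Qed.

Lemma root_of_idem H x : root_of H (root_of H x) = root_of H x.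
Proof. by apply/esym/eqP; rewrite -connE conn_root_of. Qed.

Lemma conn_setU1 H e x y : conn (e |: H) x y =
  [|| root_of H x == root_of H y,
      (root_of H x == root_of H e.1) && (root_of H e.2 == root_of H y)
    | (root_of H x == root_of H e.2) && (root_of H e.1 == root_of H y)].
Proof.
apply/idP/idP => [xy | ].
  pose P z := [|| root_of H x == root_of H z,
    (root_of H x == root_of H e.1) && (root_of H e.2 == root_of H z)
  | (root_of H x == root_of H e.2) && (root_of H e.1 == root_of H z)].
  apply: (@conn_ind _ P _ _ _ _ xy); last by rewrite /P eqxx.
  move=> u v uv; rewrite /P; move: uv; rewrite /uadj !in_setU1.
  case/orP=> [/orP[/eqP<- | uv] | /orP[/eqP<- | vu]] /=.
  - by case/or3P=> [/eqP-> | /andP[/eqP-> _] | /andP[/eqP-> _]]; rewrite !eqxx /= ?orbT.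
  - by have /eqP-> : root_of H u == root_of H v by rewrite -connE connect1 // /uadj uv.
  - by case/or3P=> [/eqP-> | /andP[/eqP-> _] | /andP[/eqP-> _]]; rewrite !eqxx /= ?orbT.
  - by have /eqP-> : root_of H u == root_of H v by rewrite -connE connect1 // /uadj vu orbT.
have sub := @conn_subset H (e |: H) _ _ (subsetUr _ _).
have e12 : conn (e |: H) e.1 e.2.
  by apply: connect1; rewrite /uadj in_setU1 -surjective_pairing eqxx.
have e21 : conn (e |: H) e.2 e.1 by rewrite conn_sym.
rewrite -!connE => /or3P[/sub // | /andP[x1 y2] | /andP[x2 y1]].
  exact: connect_trans (sub _ _ x1) (connect_trans e12 (sub _ _ y2)).
exact: connect_trans (sub _ _ x2) (connect_trans e21 (sub _ _ y1)).
Qed.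

Lemma is_rootE H u : is_root H u = (root_of H u == u).
Proof.
apply/forallP/eqP => [u_min | ru w].
  by apply: root_of_eq => [|w uw]; [exact: connect0 | move/implyP: (u_min w); apply].
by apply/implyP => uw; rewrite -{1}ru; apply: root_of_min.
Qed.

Definition roots_below H (k : nat) := #|[set u | (root_of H u == u) & (u < k)%N]|.

Lemma comp_indexE H v : comp_index H v = roots_below H (root_of H v).
Proof.
apply: eq_card => u; rewrite !inE is_rootE; congr andb.
apply/forallP/idP => [|lt_u w]; first by move/(_ (root_of H v)); rewrite conn_root_of.
by apply/implyP => /root_of_min; apply: leq_trans.
Qed.

Lemma ncompE H : ncomp H = #|[set u | root_of H u == u]|.
Proof. by apply: eq_card => u; rewrite !inE is_rootE. Qed.

Lemma roots_below_mono H : {homo roots_below H : k l / (k <= l)%N}.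
Proof.
move=> k l le_kl; apply/subset_leq_card/subsetP => u; rewrite !inE.
by case/andP=> -> /leq_trans->.
Qed.

Lemma roots_below_strict H r (k : nat) :
  root_of H r = r -> r < k -> roots_below H r < roots_below H k.
Proof.
move=> rr lt_rk; apply/proper_card/properP; split.
  by apply/subsetP => u; rewrite !inE => /andP[-> /ltn_trans->].
by exists r; rewrite !inE ?rr ?eqxx ?ltnn.
Qed.

Lemma roots_below_eq H r r' : root_of H r = r -> root_of H r' = r' ->
  (roots_below H r == roots_below H r') = (r == r').
Proof.
move=> rr rr'; apply/eqP/eqP => [eq_rr' | -> //]; apply/val_inj/eqP.
by case: ltngtP => // [/(roots_below_strict rr) | /(roots_below_strict rr')];
  rewrite eq_rr' ltnn.
Qed.

Lemma roots_below_lt H r r' : root_of H r = r -> root_of H r' = r' ->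
  (roots_below H r < roots_below H r') = (r < r').
Proof.
move=> rr rr'; apply/idP/idP => [|/(roots_below_strict rr) //].
by apply: contraTT; rewrite -!leqNgt; apply: roots_below_mono.
Qed.

Lemma comp_index_eq H u v :
  (comp_index H u == comp_index H v) = (root_of H u == root_of H v).
Proof. by rewrite !comp_indexE roots_below_eq ?root_of_idem. Qed.

Lemma comp_index_lt H v : comp_index H v < ncomp H.
Proof.
rewrite comp_indexE ncompE; apply/proper_card/properP; split.
  by apply/subsetP => u; rewrite !inE => /andP[].
by exists (root_of H v); rewrite !inE ?root_of_idem ?eqxx ?ltnn.
Qed.

Lemma comp_index_onto H (i : nat) : i < ncomp H -> exists v, comp_index H v = i.
Proof.
pose idx := [seq comp_index H u | u <- enum [set u | root_of H u == u]].
have idx_uniq : uniq idx.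
  rewrite map_inj_in_uniq ?enum_uniq // => u u'.
  rewrite !mem_enum !inE => /eqP ru /eqP ru' /eqP.
  by rewrite comp_index_eq ru ru' => /eqP.
have idx_sub : {subset idx <= iota 0 (ncomp H)}.
  by move=> _ /mapP[u _ ->]; rewrite mem_iota comp_index_lt.
have idx_size : size (iota 0 (ncomp H)) <= size idx.
  by rewrite size_iota size_map -cardE -ncompE.
have [_ idx_iota] := uniq_min_size idx_uniq idx_sub idx_size.
move=> lt_i; have : i \in idx by rewrite idx_iota mem_iota.
by case/mapP=> u _ ->; exists u.
Qed.

Lemma comp_index_eq0 H v (z : 'I_n) :
  val z = 0 -> (comp_index H v == 0) = (root_of H v == root_of H z).
Proof.
move=> z0; have rz : root_of H z = z by apply/val_inj/eqP; rewrite z0 -leqn0 -z0 root_of_le.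
rewrite rz -(roots_below_eq _ rz) ?root_of_idem // -comp_indexE.
suff -> : roots_below H z = 0 by [].
by apply: eq_card0 => u; rewrite !inE z0 andbF.
Qed.

End Components.

Section AddEdge.
Variables (n : nat) (H : {set 'I_n * 'I_n}) (e : 'I_n * 'I_n).
Hypothesis roots_neq : root_of H e.1 != root_of H e.2.
Implicit Types (u v x : 'I_n).

Let ra := root_of H e.1.
Let rb := root_of H e.2.
Let lo := if ra < rb then ra else rb.
Let hi := if ra < rb then rb else ra.
Let merged x := (root_of H x == ra) || (root_of H x == rb).

Let lo_lt_hi : lo < hi.
Proof.
rewrite /lo /hi; case: (ltnP ra rb) => // le_ba; rewrite ltn_neqAle le_ba andbT.
by rewrite val_eqE eq_sym.
Qed.

Let lo_hi_cases : (lo == ra) && (hi == rb) || (lo == rb) && (hi == ra).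
Proof. by rewrite /lo /hi; case: ifP; rewrite !eqxx ?orbT. Qed.

Let root_lo : root_of H lo = lo.
Proof. by rewrite /lo; case: ifP; rewrite root_of_idem. Qed.

Let root_hi : root_of H hi = hi.
Proof. by rewrite /hi; case: ifP; rewrite root_of_idem. Qed.

Let merged_lo x : merged x -> lo <= root_of H x.
Proof.
rewrite /merged /lo; case: (ltnP ra rb) => [/ltnW le_ab | le_ba] /orP[] /eqP->; by rewrite ?leqnn.
Qed.

Lemma root_of_setU1 x : root_of (e |: H) x = if merged x then lo else root_of H x.
Proof.
apply: root_of_eq => [|w]; rewrite conn_setU1 -/ra -/rb /merged.
  case: ifP => [|_]; last by rewrite root_of_idem eqxx.
  rewrite root_lo; case/orP: lo_hi_cases => /andP[/eqP-> _];
  by case/orP=> ->; rewrite ?eqxx ?orbT ?andbT.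
case: ifP => [|/norP[/negPf xa /negPf xb]].
  move=> xm xw; apply: leq_trans (merged_lo _) (root_of_le _ _); rewrite /merged.
  by case/orP: xm xw => /eqP-> /or3P[/eqP<- | /andP[_ /eqP<-] | /andP[_ /eqP<-]];
    rewrite ?eqxx ?orbT.
by rewrite xa xb orbF => /eqP->; apply: root_of_le.
Qed.

Lemma is_root_setU1 u : (root_of (e |: H) u == u) = (root_of H u == u) && (u != hi).
Proof.
rewrite root_of_setU1 /merged; case: ifP => [m_u | /norP[ua ub]].
  apply/eqP/andP => [<- | [/eqP ru uh]]; first by rewrite root_lo eqxx -val_eqE (ltn_eqF lo_lt_hi).
  move: m_u uh; rewrite ru; case/orP: lo_hi_cases => /andP[/eqP-> /eqP->];
  by case/orP=> /eqP->; rewrite ?eqxx.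
case: eqVneq => //= ru; apply/esym/negP => /eqP uh; move: ua ub; rewrite ru uh.
by case/orP: lo_hi_cases => /andP[_ /eqP->]; rewrite eqxx.
Qed.

Lemma roots_below_setU1 (k : nat) : roots_below (e |: H) k = roots_below H k - (hi < k).
Proof.
rewrite /roots_below (cardsD1 hi [set u | (root_of H u == u) & (u < k)%N]) inE root_hi.
rewrite eqxx addKn; apply: eq_card => u; rewrite !inE is_root_setU1.
by case: eqVneq => //=; rewrite andbF.
Qed.

Lemma ncomp_setU1 : ncomp (e |: H) = (ncomp H).-1.
Proof.
rewrite !ncompE (cardsD1 hi [set u | root_of H u == u]) inE root_hi eqxx add1n /=.
by apply: eq_card => u; rewrite !inE is_root_setU1 andbC.
Qed.

Lemma comp_index_setU1 v : comp_index (e |: H) v =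
  if (root_of H v == ra) || (root_of H v == rb)
  then minn (comp_index H e.1) (comp_index H e.2)
  else if maxn (comp_index H e.1) (comp_index H e.2) < comp_index H v
       then (comp_index H v).-1 else comp_index H v.
Proof.
rewrite comp_indexE root_of_setU1 roots_below_setU1 !comp_indexE -/ra -/rb -/(merged v).
have [lt_ab | le_ba] := ltnP ra rb.
- have le_ab := roots_below_mono H (ltnW lt_ab).
  rewrite (minn_idPl le_ab) (maxn_idPr le_ab) /lo /hi lt_ab.
  case: ifP => _; first by rewrite ltnNge (ltnW lt_ab) subn0.
  by rewrite roots_below_lt ?root_of_idem //; case: ifP; rewrite ?subn0 ?subn1.
- have le_ba' := roots_below_mono H le_ba.
  rewrite (minn_idPr le_ba') (maxn_idPl le_ba') /lo /hi ltnNge le_ba /=.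
  case: ifP => _; first by rewrite ltnNge le_ba subn0.
  by rewrite roots_below_lt ?root_of_idem //; case: ifP; rewrite ?subn0 ?subn1.
Qed.

End AddEdge.

(** * Multipaths *)

Lemma mem_zip_behead (T : eqType) (p : seq T) a b : uniq p ->
  ((a, b) \in zip p (behead p)) = [&& a \in p, b \in p & index b p == (index a p).+1].
Proof.
elim: p => [//|x p IHp] /= /andP[xp up].
have -> : zip (x :: p) p = (if p is y :: _ then [:: (x, y)] else [::]) ++ zip p (behead p).
  by case: p {IHp xp up}.
rewrite mem_cat IHp // !inE.
case: (eqVneq x a) => [<-|xa]; case: (eqVneq x b) => [<-|xb] /=.
- rewrite (negPf xp) /= orbF; case: p xp {IHp up} => //= y q.
  by rewrite !inE xpair_eqE eqxx /= => /norP[/negPf-> _].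
- rewrite (negPf xp) /= orbF; case: p {IHp up xp} => [|y q] //=.
  rewrite mem_seq1 xpair_eqE eqxx /= inE.
  by case: (eqVneq y b) => //=; rewrite andbF.
- rewrite (negPf xp) andbF /= orbF; case: p {IHp up xp} => [|y q] //=.
  by rewrite mem_seq1 xpair_eqE eq_sym (negPf xa).
- rewrite eqSS; case: p {IHp up xp} => [|y q] //=.
  by rewrite mem_seq1 xpair_eqE eq_sym (negPf xa).
Qed.

Lemma index_filter (T : eqType) (P : pred T) (s : seq T) y : P y ->
  index y (filter P s) = count P (take (index y s) s).
Proof.
move=> Py; elim: s => [//|a s IHs] /=.
case: (eqVneq a y) => [->|ay]; first by rewrite Py /= eqxx.
by case Pa: (P a); rewrite /= ?(negPf ay) IHs /= Pa.
Qed.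

Lemma count_take_mono (T : Type) (P : pred T) (s : seq T) :
  {homo (fun k => count P (take k s)) : k l / k <= l}.
Proof. by move=> k l /subnKC <-; rewrite takeD count_cat leq_addr. Qed.

Lemma count_take_nth (T : Type) (P : pred T) (s : seq T) x0 i : i < size s ->
  count P (take i.+1 s) = count P (take i s) + P (nth x0 s i).
Proof. by move=> lt_i; rewrite (take_nth x0 lt_i) -cats1 count_cat /= addn0. Qed.

Section Multipath.
Variables (n : nat) (E : {set 'I_n * 'I_n}).
Implicit Types (G H S : {set 'I_n * 'I_n}) (e : 'I_n * 'I_n) (w x y : 'I_n).
Local Notation conn H := (connect (uadj H)).

Section ComponentPath.
Variables (G : {set 'I_n * 'I_n}) (x : 'I_n) (p : seq 'I_n).
Hypotheses (p_uniq : uniq p) (mem_p : forall y, (y \in p) = conn G x y)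
  (edge_p : forall e, e.1 \in p -> (e \in G) = (e \in zip p (behead p))).

Lemma path_edge a b : (a, b) \in G -> (a \in p) || (b \in p) ->
  [/\ a \in p, b \in p & index b p = (index a p).+1].
Proof.
move=> ab ap_bp; have ap : a \in p.
  case/orP: ap_bp => // bp; rewrite mem_p (connect_trans (_ : conn G x b)) -?mem_p //.
  by rewrite connect1 // /uadj ab orbT.
by move: ab; rewrite edge_p // mem_zip_behead // => /and3P[-> -> /eqP].
Qed.

Lemma conn_below_cut S i a y : S \subset G -> i.+1 < size p ->
  (nth x p i, nth x p i.+1) \notin S ->
  a \in p -> index a p <= i -> conn S a y -> (y \in p) && (index y p <= i).
Proof.
move=> sSG lt_i cut ap le_a ay.
apply: (@conn_ind _ S [pred z | (z \in p) && (index z p <= i)] a y _ _ ay); last by rewrite /= ap.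
move=> u v + /andP[up le_u] /=; rewrite /uadj => /orP[] uv.
  have [_ vp iv] := path_edge (subsetP sSG _ uv) (introT orP (or_introl up)).
  rewrite vp iv /=; case: ltngtP le_u => // eq_u _; case/negP: cut.
  by rewrite -eq_u -iv !nth_index.
have [vp _ eq_u] := path_edge (subsetP sSG _ uv) (introT orP (or_intror up)).
by rewrite vp /= (leq_trans _ le_u) // eq_u.
Qed.

End ComponentPath.

Lemma multipath_out_uniq G y w w' : multipath E G ->
  (y, w) \in G -> (y, w') \in G -> w = w'.
Proof.
case=> _ /(_ y) [p [up mem_p edge_p]] yw yw'.
have yp : y \in p by rewrite mem_p connect0.
have [_ wp iw] := path_edge up mem_p edge_p yw (introT orP (or_introl yp)).
have [_ wp' iw'] := path_edge up mem_p edge_p yw' (introT orP (or_introl yp)).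
by rewrite -(nth_index y wp) -(nth_index y wp') iw iw'.
Qed.

Lemma multipath_in_uniq G y w w' : multipath E G ->
  (w, y) \in G -> (w', y) \in G -> w = w'.
Proof.
case=> _ /(_ y) [p [up mem_p edge_p]] wy w'y.
have yp : y \in p by rewrite mem_p connect0.
have [wp _ iw] := path_edge up mem_p edge_p wy (introT orP (or_intror yp)).
have [wp' _ iw'] := path_edge up mem_p edge_p w'y (introT orP (or_intror yp)).
by rewrite -(nth_index y wp) -(nth_index y wp'); congr nth; apply: succn_inj; rewrite -iw -iw'.
Qed.

Definition sink G y := [forall w, (y, w) \notin G].
Definition source G y := [forall w, (w, y) \notin G].

Lemma multipath_sink G x : multipath E G -> exists2 y, conn G x y & sink G y.
Proof.
case=> _ /(_ x) [p [up mem_p edge_p]].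
have xp : x \in p by rewrite mem_p connect0.
have p_gt0 : 0 < size p by case: p xp {mem_p edge_p up}.
have yp : nth x p (size p).-1 \in p by rewrite mem_nth // prednK.
exists (nth x p (size p).-1); first by rewrite -mem_p.
apply/forallP => w; apply/negP => /(path_edge up mem_p edge_p).
rewrite yp => /(_ isT) [_ wp]; rewrite index_uniq ?prednK // => iw.
by have := index_mem w p; rewrite wp iw ltnn.
Qed.

Lemma sink_uniq G x y y' : multipath E G -> conn G x y -> conn G x y' ->
  sink G y -> sink G y' -> y = y'.
Proof.
case=> _ /(_ x) [p [up mem_p edge_p]]; rewrite -!mem_p => yp y'p.
suff last_p z : z \in p -> sink G z -> index z p = (size p).-1.
  by move=> sy sy'; rewrite -(nth_index y yp) -(nth_index y y'p) !last_p.
move=> zp /forallP sz; have : index z p < size p by rewrite index_mem.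
case: (ltnP (index z p).+1 (size p)) => [lt_z _ | ]; last by lia.
have := sz (nth z p (index z p).+1).
by rewrite edge_p // mem_zip_behead // zp mem_nth // index_uniq // eqxx.
Qed.

Lemma source_uniq G x y y' : multipath E G -> conn G x y -> conn G x y' ->
  source G y -> source G y' -> y = y'.
Proof.
case=> _ /(_ x) [p [up mem_p edge_p]]; rewrite -!mem_p => yp y'p.
suff head_p z : z \in p -> source G z -> index z p = 0.
  by move=> sy sy'; rewrite -(nth_index y yp) -(nth_index y y'p) !head_p.
move=> zp /forallP sz; case: (posnP (index z p)) => // z_gt0.
have lt_z : (index z p).-1 < size p by rewrite (leq_ltn_trans (leq_pred _)) ?index_mem.
have wp : nth z p (index z p).-1 \in p by rewrite mem_nth.
have := sz (nth z p (index z p).-1).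
by rewrite edge_p // mem_zip_behead // zp wp index_uniq // prednK // eqxx.
Qed.

(* The path of x in S is the path of x in G filtered to the S-component of x. *)
Lemma multipath_subset G S : multipath E G -> S \subset G -> multipath E S.
Proof.
move=> mG sSG; split; first by apply: subset_trans sSG _; case: mG.
move=> x; have [_ /(_ x) [p [up mem_p edge_p]]] := mG.
pose P := [pred y | conn S x y].
exists (filter P p); split; first exact: filter_uniq.
  move=> y; rewrite mem_filter /= andb_idr // => xy.
  by rewrite mem_p (conn_subset sSG xy).
case=> a b /=; rewrite mem_filter => /andP[xa ap].
have edge_P c : (a, c) \in S -> P c.
  by move=> ac; apply: connect_trans xa (connect1 _); rewrite /uadj ac.
rewrite mem_zip_behead ?filter_uniq // !mem_filter xa ap /=.
apply/idP/andP => [ab | [/andP[xb bp]]].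
  have [_ bp ib] := path_edge up mem_p edge_p (subsetP sSG _ ab) (introT orP (or_introl ap)).
  have xb := edge_P b ab; split; first by rewrite bp andbT; apply: xb.
  rewrite !index_filter // ib (count_take_nth _ x) ?index_mem //.
  by rewrite nth_index // xa addn1.
rewrite !index_filter // => /eqP ib.
have lt_ab : index a p < index b p.
  by rewrite ltnNge; apply/negP => /(count_take_mono P p); rewrite ib ltnn.
have lt_a1 : (index a p).+1 < size p by apply: leq_ltn_trans lt_ab _; rewrite index_mem.
have ia : nth x p (index a p) = a by rewrite nth_index.
have [aw | naw] := boolP ((a, nth x p (index a p).+1) \in S).
  suff <- : nth x p (index a p).+1 = b by [].
  have count2 : count P (take (index a p).+2 p) = (count P (take (index a p) p)).+2.
    rewrite (count_take_nth _ x) // (count_take_nth _ x) ?(ltnW lt_a1) // ia xa.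
    by rewrite (edge_P _ aw) addn1 addn1.
  have ib1 : index b p = (index a p).+1.
    apply/eqP; rewrite eqn_leq lt_ab andbT leqNgt; apply/negP.
    by move/(count_take_mono P p); rewrite count2 ib ltnn.
  by rewrite -ib1 nth_index.
have ab : conn S a b by apply: connect_trans xb; rewrite conn_sym.
have cut : (nth x p (index a p), nth x p (index a p).+1) \notin S by rewrite ia.
have /andP[_] := conn_below_cut up mem_p edge_p sSG lt_a1 cut ap (leqnn _) ab.
by rewrite leqNgt lt_ab.
Qed.

Lemma sink_subset G H y : H \subset G -> sink G y -> sink H y.
Proof.
move=> sHG /forallP sy; apply/forallP => w; apply: contra (sy w).
exact: (subsetP sHG).
Qed.

Lemma sink_of_missing_edge G H e : multipath E G -> e \in G -> e \notin H ->
  H \subset G -> sink H e.1.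
Proof.
move=> mG eG eH sHG; apply/forallP => w; apply: contra eH => e1w.
have := multipath_out_uniq mG (subsetP sHG _ e1w) (_ : (e.1, e.2) \in G).
by rewrite -surjective_pairing => /(_ eG) we2; rewrite [e]surjective_pairing -we2.
Qed.

Lemma source_of_missing_edge G H e : multipath E G -> e \in G -> e \notin H ->
  H \subset G -> source H e.2.
Proof.
move=> mG eG eH sHG; apply/forallP => w; apply: contra eH => we2.
have := multipath_in_uniq mG (subsetP sHG _ we2) (_ : (e.1, e.2) \in G).
by rewrite -surjective_pairing => /(_ eG) we1; rewrite [e]surjective_pairing -we1.
Qed.

(* Otherwise e.1 would be the sink of its component both in H and in e |: H,
   although e leaves it. *)
Lemma cover_roots_neq H e : multipath E H -> multipath E (e |: H) -> e \notin H ->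
  root_of H e.1 != root_of H e.2.
Proof.
move=> mH mG eH; apply/negP => /eqP r12.
have sHG : H \subset e |: H by apply: subsetUr.
have eG : e \in e |: H by rewrite setU11.
have [y e1y sy] := multipath_sink e.1 mG.
have e1y_H : conn H e.1 y.
  move: e1y; rewrite conn_setU1 connE -r12.
  by case/or3P=> // /andP[_ /eqP <-]; rewrite ?r12 eqxx.
have ye1 := sink_uniq mH (connect0 _ e.1) e1y_H
  (sink_of_missing_edge mG eG eH sHG) (sink_subset sHG sy).
by move/forallP: sy => /(_ e.2); rewrite -ye1 -surjective_pairing eG.
Qed.

Section TwoCovers.
Variables (H : {set 'I_n * 'I_n}) (e f : 'I_n * 'I_n).
Hypotheses (mH : multipath E H) (mG : multipath E (f |: (e |: H))).
Hypotheses (eH : e \notin H) (fH : f \notin H) (ef : e != f).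

Let sHG : H \subset f |: (e |: H). Proof. by rewrite setUA subsetUr. Qed.
Let eG : e \in f |: (e |: H). Proof. by rewrite !inE eqxx orbT. Qed.
Let fG : f \in f |: (e |: H). Proof. by rewrite !inE eqxx. Qed.

Lemma covers_src_roots_neq : root_of H e.1 != root_of H f.1.
Proof.
apply: contra ef; rewrite -connE => e1f1.
have e1 := sink_uniq mH (connect0 _ e.1) e1f1
  (sink_of_missing_edge mG eG eH sHG) (sink_of_missing_edge mG fG fH sHG).
have := multipath_out_uniq mG (_ : (e.1, e.2) \in _) (_ : (e.1, f.2) \in _).
rewrite -surjective_pairing e1 -surjective_pairing => /(_ eG fG) e2.
by rewrite [e]surjective_pairing [f]surjective_pairing e1 e2.
Qed.

Lemma covers_tgt_roots_neq : root_of H e.2 != root_of H f.2.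
Proof.
apply: contra ef; rewrite -connE => e2f2.
have e2 := source_uniq mH (connect0 _ e.2) e2f2
  (source_of_missing_edge mG eG eH sHG) (source_of_missing_edge mG fG fH sHG).
have := multipath_in_uniq mG (_ : (e.1, e.2) \in _) (_ : (f.1, e.2) \in _).
rewrite -surjective_pairing e2 -surjective_pairing => /(_ eG fG) e1.
by rewrite [e]surjective_pairing [f]surjective_pairing e1 e2.
Qed.

End TwoCovers.

End Multipath.

(** * Merging tensor factors *)

Lemma bumpE (p j : nat) : bump p j = if j < p then j else j.+1.
Proof. by rewrite /bump; case: leqP; rewrite ?add0n ?add1n. Qed.

Lemma nth_rem_nth (T : Type) (x0 : T) p (l : seq T) j :
  nth x0 (rem_nth p l) j = nth x0 l (bump p j).
Proof.
rewrite /rem_nth bumpE; case: (ltnP p (size l)) => lt_p.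
  rewrite nth_cat size_take lt_p; case: ltnP => le_pj; first by rewrite nth_take.
  by rewrite nth_drop; congr nth; lia.
rewrite take_oversize // drop_oversize ?(leq_trans lt_p) // cats0.
by case: ltnP => le_pj //; rewrite !nth_default //; lia.
Qed.

Lemma size_rem_nth (T : Type) p (l : seq T) : p < size l -> size (rem_nth p l) = (size l).-1.
Proof. by move=> lt_p; rewrite /rem_nth size_cat size_take lt_p size_drop; lia. Qed.

Ltac case_ifs := repeat match goal with |- context [if ?c then _ else _] =>
  lazymatch c with context [if _ then _ else _] => fail | _ => case: (boolP c) => /= ? end end.

Ltac finish_nth := first [ by [] | (exfalso; lia) | (congr nth; lia) ].

Section Merge.
Local Open Scope ring_scope.
Variables (R : comNzRingType) (A : algType R) (M : bimodule A).
Local Notation Mc := (bm_car M).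
Implicit Types (m : Mc) (l : seq A) (s t : nat).

Lemma merge_fst s t m l : (merge s t m l).1 =
  if s == 0%N then ract m (nth 0 l t.-1)
  else if t == 0%N then lact (nth 0 l s.-1) m else m.
Proof. by rewrite /merge; case: ifP => //; case: ifP. Qed.

Lemma nth_merge s t m l j : nth 0 (merge s t m l).2 j =
  if s == 0%N then nth 0 l (bump t.-1 j)
  else if t == 0%N then nth 0 l (bump s.-1 j)
  else if bump (maxn s t).-1 j == (minn s t).-1 then nth 0 l s.-1 * nth 0 l t.-1
  else nth 0 l (bump (maxn s t).-1 j).
Proof.
rewrite /merge; case: ifP => _ /=; first by rewrite nth_rem_nth.
by case: ifP => _ /=; rewrite nth_rem_nth // nth_set_nth.
Qed.

Lemma merge_snd_indep s t m m' l : (merge s t m l).2 = (merge s t m' l).2.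
Proof. by rewrite /merge; case: ifP => //; case: ifP. Qed.

Lemma size_merge_snd s t m l : s != t -> (s <= size l)%N -> (t <= size l)%N ->
  size (merge s t m l).2 = (size l).-1.
Proof.
move=> st le_s le_t; rewrite /merge; case: ifP => [/eqP s0|_] /=.
  by rewrite size_rem_nth //; lia.
case: ifP => [/eqP t0|_] /=; first by rewrite size_rem_nth //; lia.
by rewrite size_rem_nth size_set_nth; [congr predn|]; lia.
Qed.

Lemma merge_fst_linear s t l : is_linear (fun m => (merge s t m l).1).
Proof.
move=> r m m'; rewrite !merge_fst.
by case: ifP => _; [rewrite ract_linl | case: ifP => _; rewrite ?lact_linr].
Qed.

Section MergeSlot.
Variables (s t : nat) (m : Mc) (l0 : seq A) (i : nat) (lx : A -> seq A).
Hypotheses (neq_st : s != t) (lt_i : (i < size l0)%N).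
Hypotheses (le_s : (s <= size l0)%N) (le_t : (t <= size l0)%N).
Hypothesis nth_lx : forall x j, nth 0 (lx x) j = if j == i then x else nth 0 l0 j.

(* Factor indices are shifted: [nth 0 l i] is factor i.+1, factor 0 being m. *)
Definition slot_absorbed := (s == 0%N) && (i == t.-1) || (t == 0%N) && (i == s.-1).

Lemma merge_slot_absorbed : slot_absorbed ->
  exists2 mu : A -> Mc, is_linear mu & forall x,
    (merge s t m (lx x)).1 = mu x /\
    forall j, nth 0 (merge s t m (lx x)).2 j = nth 0 (merge s t m l0).2 j.
Proof.
case/orP=> [/andP[/eqP s0 /eqP it] | /andP[/eqP t0 /eqP it]].
  exists (ract m) => [r x y | x]; first by rewrite ract_linr.
  rewrite merge_fst s0 eqxx nth_lx -it eqxx; split=> // j.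
  by rewrite !nth_merge eqxx nth_lx -it eq_sym (negPf (neq_bump _ _)).
have s0 : s != 0%N by rewrite -t0.
exists (fun x => lact x m) => [r x y | x]; first by rewrite lact_linl.
rewrite merge_fst (negPf s0) t0 eqxx nth_lx -it eqxx; split=> // j.
by rewrite !nth_merge (negPf s0) eqxx nth_lx -it eq_sym (negPf (neq_bump _ _)).
Qed.

Lemma merge_slot_kept : ~~ slot_absorbed ->
  exists j0 (phi : A -> A), [/\ (j0 < (size l0).-1)%N, is_linear phi & forall x,
    (merge s t m (lx x)).1 = (merge s t m l0).1 /\
    forall j, nth 0 (merge s t m (lx x)).2 j =
              if j == j0 then phi x else nth 0 (merge s t m l0).2 j].
Proof.
rewrite /slot_absorbed negb_or !negb_and => /andP[st0 ts0].
have [s0 | s0] := eqVneq s 0%N.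
  have it : i != t.-1 by move: st0; rewrite s0.
  exists (if (i < t.-1)%N then i else i.-1), id; split=> [|//|x]; first by case_ifs; lia.
  rewrite !merge_fst s0 eqxx nth_lx [t.-1 == i]eq_sym (negPf it); split=> // j.
  by rewrite !nth_merge eqxx !nth_lx !bumpE; case_ifs; finish_nth.
have [t0 | t0] := eqVneq t 0%N.
  have it : i != s.-1 by move: ts0; rewrite t0.
  exists (if (i < s.-1)%N then i else i.-1), id; split=> [|//|x]; first by case_ifs; lia.
  rewrite !merge_fst (negPf s0) t0 eqxx nth_lx [s.-1 == i]eq_sym (negPf it); split=> // j.
  by rewrite !nth_merge (negPf s0) eqxx !nth_lx !bumpE; case_ifs; finish_nth.
have merge_fst_eq x : (merge s t m (lx x)).1 = (merge s t m l0).1.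
  by rewrite !merge_fst (negPf s0) (negPf t0).
have [i_s | ni_s] := eqVneq i s.-1.
  have nt_i : t.-1 != i by rewrite i_s; apply/negP => /eqP; lia.
  exists (minn s t).-1, ( *%R^~ (nth 0 l0 t.-1)); split=> [|r x y|x]; first by lia.
    by rewrite /= mulrDl scalerAl.
  split=> // j; rewrite !nth_merge (negPf s0) (negPf t0) !nth_lx (negPf nt_i) i_s eqxx !bumpE.
  by case_ifs; finish_nth.
have [i_t | ni_t] := eqVneq i t.-1.
  exists (minn s t).-1, ( *%R (nth 0 l0 s.-1)); split=> [|r x y|x]; first by lia.
    by rewrite /= mulrDr scalerAr.
  split=> // j; rewrite !nth_merge (negPf s0) (negPf t0) !nth_lx [s.-1 == i]eq_sym.
  by rewrite (negPf ni_s) i_t eqxx !bumpE; case_ifs; finish_nth.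
exists (if (i < (maxn s t).-1)%N then i else i.-1), id; split=> [|//|x].
  by case_ifs; lia.
split=> // j; rewrite !nth_merge (negPf s0) (negPf t0) !nth_lx ![_.-1 == i]eq_sym.
by rewrite (negPf ni_s) (negPf ni_t) !bumpE; case_ifs; finish_nth.
Qed.

End MergeSlot.

End Merge.

Section Tensors.
Local Open Scope ring_scope.
Variables (R : comNzRingType) (A : algType R) (M : bimodule A).
Variable tf : forall k : nat, tensor_power (bm_car M) A k.
Local Notation Mc := (bm_car M).

Lemma is_linear_comp (U V W : lmodType R) (f : U -> V) (g : V -> W) :
  is_linear f -> is_linear g -> is_linear (g \o f).
Proof. by move=> lin_f lin_g r x y /=; rewrite lin_f lin_g. Qed.

Lemma is_linear_eq (U W : lmodType R) (f g : U -> W) :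
  f =1 g -> is_linear g -> is_linear f.
Proof. by move=> eq_fg lin_g r x y; rewrite !eq_fg lin_g. Qed.

Lemma size_ftoseq k (as_ : {ffun 'I_k -> A}) : size (ftoseq as_) = k.
Proof. by rewrite size_map size_enum_ord. Qed.

Lemma nth_ftoseq k (as_ : {ffun 'I_k -> A}) (j : 'I_k) : nth 0 (ftoseq as_) j = as_ j.
Proof. by rewrite /ftoseq (nth_map j) ?size_enum_ord // nth_ord_enum. Qed.

Lemma nth_ftoseq_fupd k (as_ : {ffun 'I_k -> A}) (i : 'I_k) x j :
  nth 0 (ftoseq (fupd as_ i x)) j = if j == i then x else nth 0 (ftoseq as_) j.
Proof.
have [lt_j | le_j] := ltnP j k.
  by rewrite -[j]/(val (Ordinal lt_j)) !nth_ftoseq ffunE.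
rewrite !nth_default ?size_ftoseq //; case: eqP => // ji.
by move: (ltn_ord i); rewrite -ji ltnNge le_j.
Qed.

Lemma seqtofK k (l : seq A) : size l = k -> ftoseq (seqtof k l) = l.
Proof.
move=> size_l; apply: (@eq_from_nth _ 0) => [|j]; rewrite size_ftoseq // => lt_j.
by rewrite -[j]/(val (Ordinal lt_j)) nth_ftoseq ffunE.
Qed.

Lemma eq_seqtof k (l l' : seq A) :
  (forall j, nth 0 l j = nth 0 l' j) -> seqtof k l = seqtof k l'.
Proof. by move=> eq_l; apply/ffunP => j; rewrite !ffunE eq_l. Qed.

Lemma tensor_linear_ext k (W : lmodType R) (g g' : tp_car (tf k) -> W) :
  is_linear g -> is_linear g' ->
  (forall m as_, g (tp_tens (tf k) m as_) = g' (tp_tens (tf k) m as_)) -> g =1 g'.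
Proof.
move=> lin_g lin_g' eq_pure; have [lin_m lin_a] := tp_multilinear (tf k).
have ml : multilinear (fun m as_ => g (tp_tens (tf k) m as_)).
  by split=> [as_ | m as_ i]; apply: is_linear_comp lin_g.
have [h [_ _ h_uniq]] := tp_universal (tf k) ml.
by move=> x; rewrite (h_uniq g) // (h_uniq g').
Qed.

Definition merge_tensor (s t k : nat) (m : Mc) (l : seq A) : tp_car (tf k) :=
  tp_tens (tf k) (merge s t m l).1 (seqtof k (merge s t m l).2).

Lemma merge_tensor_multilinear s t k k' : s != t -> (s <= k)%N -> (t <= k)%N ->
  k' = k.-1 ->
  multilinear (fun m (as_ : {ffun 'I_k -> A}) => merge_tensor s t k' m (ftoseq as_)).
Proof.
move=> neq_st le_s le_t ->; have [lin_m lin_a] := tp_multilinear (tf k.-1); split.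
  move=> as_ r m m'; rewrite /merge_tensor (merge_fst_linear s t _ r m m').
  by rewrite (merge_snd_indep _ _ (r *: m + m') m) (merge_snd_indep _ _ m' m) lin_m.
move=> m as_ i; have size_as := size_ftoseq as_.
have le_s' : (s <= size (ftoseq as_))%N by rewrite size_as.
have le_t' : (t <= size (ftoseq as_))%N by rewrite size_as.
have lt_i : (i < size (ftoseq as_))%N by rewrite size_as.
have slot := nth_ftoseq_fupd as_ i.
have [absorbed | kept] := boolP (slot_absorbed s t i).
  have [mu lin_mu merge_mu] := merge_slot_absorbed m neq_st slot absorbed.
  pose l' := seqtof k.-1 (merge s t m (ftoseq as_)).2.
  apply: (@is_linear_eq _ _ _ (fun x => tp_tens (tf k.-1) (mu x) l')) => [x|].
    have [<- eq_snd] := merge_mu x; rewrite /merge_tensor; congr tp_tens; exact: eq_seqtof.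
  exact: is_linear_comp lin_mu (lin_m _).
have [j0 [phi [lt_j0 lin_phi merge_phi]]] :=
  merge_slot_kept m neq_st lt_i le_s' le_t' slot kept.
rewrite size_as in lt_j0.
pose L := merge s t m (ftoseq as_).
pose lx x := fupd (seqtof k.-1 L.2) (Ordinal lt_j0) (phi x).
apply: (@is_linear_eq _ _ _ (fun x => tp_tens (tf k.-1) L.1 (lx x))) => [x|].
  have [eq_fst eq_snd] := merge_phi x; rewrite /merge_tensor eq_fst; congr tp_tens.
  by apply/ffunP => j; rewrite !ffunE eq_snd -val_eqE.
exact: is_linear_comp lin_phi (lin_a _ _ _).
Qed.

End Tensors.

(** * States *)

Section States.
Local Open Scope ring_scope.
Variables (R : comNzRingType) (A : algType R) (M : bimodule A).
Variable tf : forall k : nat, tensor_power (bm_car M) A k.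
Variable n : nat.
Local Notation Mc := (bm_car M).
Implicit Types (H : {set 'I_n * 'I_n}) (e : 'I_n * 'I_n).

Lemma cover_mapP H e : root_of H e.1 != root_of H e.2 ->
  cover_spec (cover_map (tf := tf) (H := H) e).
Proof.
move=> roots_neq; apply: epsilon_spec.
have le_s : (comp_index H e.1 <= (ncomp H).-1)%N by have := comp_index_lt H e.1; lia.
have le_t : (comp_index H e.2 <= (ncomp H).-1)%N by have := comp_index_lt H e.2; lia.
have neq_st : comp_index H e.1 != comp_index H e.2 by rewrite comp_index_eq.
have ncomp_eq : (ncomp (e |: H)).-1 = (ncomp H).-2 by rewrite (ncomp_setU1 roots_neq).
have ml := merge_tensor_multilinear tf neq_st le_s le_t ncomp_eq.
have [g [lin_g g_pure _]] := tp_universal (tf (ncomp H).-1) ml.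
exists g; split=> // m as_; rewrite g_pure /merge_tensor.
by case: (merge _ _ _ _).
Qed.

(* A state (m, lab) stands for the pure tensor m (x) lab c_1 (x) ... (x) lab c_k,
   lab c being the label of any vertex of the component c. *)
Definition state := (Mc * ('I_n -> A))%type.

Definition comp_const H (lab : 'I_n -> A) :=
  forall u v, root_of H u = root_of H v -> lab u = lab v.

Definition represents H (x : Fobj tf H) (st : state) :=
  exists2 l : seq A,
    size l = (ncomp H).-1 /\
    (forall v, (0 < comp_index H v)%N -> nth 0 l (comp_index H v).-1 = st.2 v) &
    x = tp_tens (tf (ncomp H).-1) st.1 (seqtof _ l).

Definition merge_state H e (st : state) : state :=
  (if comp_index H e.1 == 0%N then ract st.1 (st.2 e.2)
   else if comp_index H e.2 == 0%N then lact (st.2 e.1) st.1 else st.1,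
   fun v => if (root_of H v == root_of H e.1) || (root_of H v == root_of H e.2)
            then st.2 e.1 * st.2 e.2 else st.2 v).

Definition pure_state H m (as_ : {ffun 'I_(ncomp H).-1 -> A}) : state :=
  (m, fun v => nth 0 (ftoseq as_) (comp_index H v).-1).

Lemma represents_pure H m as_ :
  represents (tp_tens (tf (ncomp H).-1) m as_ : Fobj tf H) (pure_state m as_).
Proof.
exists (ftoseq as_); first by rewrite size_ftoseq.
by congr tp_tens; apply/ffunP => j; rewrite ffunE nth_ftoseq.
Qed.

Lemma comp_const_pure H m (as_ : {ffun 'I_(ncomp H).-1 -> A}) : comp_const H (pure_state m as_).2.
Proof. by move=> u v eq_uv; rewrite /= !comp_indexE eq_uv. Qed.

Lemma represents_inj H (x y : Fobj tf H) st : represents x st -> represents y st -> x = y.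
Proof.
case=> l [size_l nth_l] ->; case=> l' [size_l' nth_l'] ->.
congr tp_tens; apply: eq_seqtof => j.
have [lt_j | le_j] := ltnP j (ncomp H).-1; last by rewrite !nth_default ?size_l ?size_l'.
have [v idx_v] : exists v, comp_index H v = j.+1 by apply: comp_index_onto; lia.
by move: (nth_l v) (nth_l' v); rewrite idx_v => <- // <-.
Qed.

Lemma comp_const_merge_state H e st :
  comp_const H st.2 -> comp_const (e |: H) (merge_state H e st).2.
Proof.
move=> const_st u v /eqP; rewrite -connE conn_setU1 /=.
case/or3P=> [/eqP eq_uv | /andP[/eqP-> /eqP<-] | /andP[/eqP-> /eqP<-]]; last 2 first.
- by rewrite !eqxx ?orbT.
- by rewrite !eqxx ?orbT.
by rewrite eq_uv; case: ifP => // _; apply: const_st.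
Qed.

Lemma represents_cover H e (x : Fobj tf H) st : root_of H e.1 != root_of H e.2 ->
  represents x st -> represents (cover_map e x) (merge_state H e st).
Proof.
move=> roots_neq [l [size_l nth_l] ->]; have [_ cover_pure] := cover_mapP roots_neq.
rewrite cover_pure seqtofK // (surjective_pairing (merge _ _ _ _)) /=.
have neq_st : comp_index H e.1 != comp_index H e.2 by rewrite comp_index_eq.
have lt_s := comp_index_lt H e.1; have lt_t := comp_index_lt H e.2.
set s := comp_index H e.1 in neq_st lt_s lt_t *.
set t := comp_index H e.2 in neq_st lt_s lt_t *.
exists (merge s t st.1 l).2; last first.
  congr tp_tens; rewrite merge_fst /merge_state /= -/s -/t.
  by case: eqP => [s0 | _]; [|case: eqP => [t0 | _] //]; rewrite nth_l //; lia.
split; first by rewrite size_merge_snd ?size_l ?(ncomp_setU1 roots_neq) //; lia.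
move=> v; rewrite /merge_state /= (comp_index_setU1 roots_neq) -/s -/t.
case: ifP => [merged | not_merged] idx_v.
  have [s0 t0] : s != 0%N /\ t != 0%N by split; apply/negP => /eqP; lia.
  rewrite nth_merge (negPf s0) (negPf t0) bumpE.
  have -> : ((minn s t).-1 < (maxn s t).-1)%N by lia.
  by rewrite eqxx !nth_l ?lt0n.
have v_s : comp_index H v != s.
  by rewrite comp_index_eq; apply/eqP => ve1; rewrite ve1 eqxx in not_merged.
have v_t : comp_index H v != t.
  by rewrite comp_index_eq; apply/eqP => ve2; rewrite ve2 eqxx orbT in not_merged.
rewrite nth_merge -(nth_l v); last by move: idx_v; case_ifs; lia.
by move: idx_v; rewrite !bumpE; case_ifs => ?; finish_nth.
Qed.

End States.

Ltac case_var_eqs := repeat match goal with |- context [?x == ?y] =>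
  is_var x; is_var y; case: (eqVneq x y) => [?|?]; try subst end;
  try match goal with h : is_true (?x != ?x) |- _ => by rewrite eqxx in h end.

Section Square.
Local Open Scope ring_scope.
Variables (R : comNzRingType) (A : algType R) (M : bimodule A) (n : nat).
Variables (E H : {set 'I_n * 'I_n}) (e f : 'I_n * 'I_n).
Hypotheses (mH : multipath E H) (mG : multipath E (f |: (e |: H))).
Hypotheses (eH : e \notin H) (fH : f \notin H) (ef : e != f).

(* In a multipath, e and f cannot leave the same component, enter the same
   component, or join two components both ways (ns, nt, nef); once the five
   relevant roots are generalized, every remaining configuration holds by
   associativity. *)
Lemma merge_state_comm (st : state M n) : comp_const H st.2 ->
  merge_state (e |: H) f (merge_state H e st) = merge_state (f |: H) e (merge_state H f st).
Proof.
move=> const_st.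
have mE : multipath E (e |: H) by apply: multipath_subset mG _; apply: subsetUr.
have fE : f \notin e |: H by rewrite !inE negb_or eq_sym ef.
have ne := cover_roots_neq mH mE eH.
have ns := covers_src_roots_neq mH mG eH fH ef.
have nt := covers_tgt_roots_neq mH mG eH fH ef.
have nef := cover_roots_neq mE mG fE; rewrite -connE conn_setU1 in nef.
have n_gt0 : (0 < n)%N by case: (e.1) => /= k; case: n.
pose z := Ordinal n_gt0; have val_z : val z = 0%N by [].
case: st const_st => m lab /= const_st.
have lab_root x : lab x = lab (root_of H x) by apply: const_st; rewrite root_of_idem.
rewrite /merge_state /= !(comp_index_eq0 _ _ val_z) -!connE !conn_setU1 !connE.
congr pair.
{ rewrite (lab_root e.1) (lab_root e.2) (lab_root f.1) (lab_root f.2).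
  move: ne ns nt nef.
  move: (root_of H e.1) (root_of H e.2) (root_of H f.1) (root_of H f.2) (root_of H z) => a b c d r0.
  by case_var_eqs; rewrite ?eqxx //= => *; rewrite ?mulrA ?ractA ?lactA ?lact_ract. }
apply: functional_extensionality => v.
rewrite -!connE !conn_setU1 !connE.
rewrite (lab_root e.1) (lab_root e.2) (lab_root f.1) (lab_root f.2) (lab_root v).
move: ne ns nt nef.
move: (root_of H e.1) (root_of H e.2) (root_of H f.1) (root_of H f.2) (root_of H v) => a b c d w.
by case_var_eqs; rewrite ?eqxx //= => *; rewrite ?mulrA.
Qed.

End Square.

(** * Chains of coverings *)

Section Chains.
Variables (n : nat) (E : {set 'I_n * 'I_n}).
Implicit Types (H K : {set 'I_n * 'I_n}) (e : 'I_n * 'I_n) (es : seq ('I_n * 'I_n)).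

Lemma chain_multipath H es : is_chain E H es -> multipath E H.
Proof. by case: es => [|e es] //= []. Qed.

Lemma chain_end_multipath H es : is_chain E H es -> multipath E (chain_end H es).
Proof. by elim: es H => [|e es IHes] H //= [_ _ /IHes]. Qed.

Lemma chain_endE H es : chain_end H es = H :|: [set e in es].
Proof.
elim: es H => [|e es IHes] H /=; first by apply/setP => x; rewrite !inE orbF.
by rewrite IHes; apply/setP => x; rewrite !inE; case: (x == e); rewrite ?orbT.
Qed.

Lemma chain_end_cat H es es' : chain_end H (es ++ es') = chain_end (chain_end H es) es'.
Proof. exact: foldl_cat. Qed.

Lemma chain_new_edges H es : is_chain E H es -> uniq es /\ {in es, forall e, e \notin H}.
Proof.
elim: es H => [|e es IHes] H //= [_ eH /IHes [es_uniq es_new]]; split.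
  by rewrite es_uniq andbT; apply/negP => /es_new; rewrite !inE eqxx.
move=> x; rewrite inE => /predU1P[-> // | /es_new].
by rewrite !inE negb_or => /andP[].
Qed.

Lemma size_chain H es : is_chain E H es -> size es = #|chain_end H es :\: H|.
Proof.
move=> /chain_new_edges [es_uniq es_new]; rewrite chain_endE -(card_uniqP es_uniq).
apply: eq_card => x; rewrite !inE; case: (boolP (x \in es)) => [/es_new -> | _];
  by rewrite ?orbT ?orbF ?andNb.
Qed.

Lemma chain_cat H es es' : is_chain E H es -> is_chain E (chain_end H es) es' ->
  is_chain E H (es ++ es').
Proof. by elim: es H => [|e es IHes] H //= [mH eH c] c'; split=> //; apply: IHes. Qed.

Lemma chain_of_seq H K es : multipath E K -> H \subset K -> uniq es ->
  {in es, forall e, (e \in K) && (e \notin H)} -> is_chain E H es.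
Proof.
move=> mK; elim: es H => [|e es IHes] H sHK; first by move=> *; apply: multipath_subset mK sHK.
case/andP=> e_es es_uniq es_new; have /andP[eK eH] := es_new e (mem_head _ _).
split=> //; first exact: multipath_subset mK sHK.
apply: IHes => //; first by rewrite subUset sub1set eK.
move=> x x_es; have /andP[-> xH] := es_new x (mem_behead (s := e :: es) x_es).
by rewrite !inE negb_or xH andbT; apply: contraNneq e_es => <-.
Qed.

Lemma chain_exists H K : multipath E H -> multipath E K -> H \subset K ->
  exists es, is_chain E H es /\ chain_end H es = K.
Proof.
move=> mH mK sHK; exists (enum (K :\: H)); split.
  by apply: chain_of_seq mK sHK (enum_uniq _) _ => x; rewrite mem_enum !inE andbC.
rewrite chain_endE; apply/setP => x; rewrite !inE mem_enum !inE.
by case: (boolP (x \in H)) => [/(subsetP sHK)-> | _] //=; rewrite orbF.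
Qed.

End Chains.

Section ChainMaps.
Local Open Scope ring_scope.
Variables (R : comNzRingType) (A : algType R) (M : bimodule A).
Variable tf : forall k : nat, tensor_power (bm_car M) A k.
Variables (n : nat) (E : {set 'I_n * 'I_n}).
Implicit Types (H K : {set 'I_n * 'I_n}) (e : 'I_n * 'I_n) (es : seq ('I_n * 'I_n)).

Fixpoint chain_state H es (st : state M n) : state M n :=
  if es is e :: es' then chain_state (e |: H) es' (merge_state H e st) else st.

Lemma chain_state_cat H es es' st :
  chain_state H (es ++ es') st = chain_state (chain_end H es) es' (chain_state H es st).
Proof. by elim: es H st => [|e es IHes] H st //=. Qed.

Lemma comp_const_chain_state H es st :
  comp_const H st.2 -> comp_const (chain_end H es) (chain_state H es st).2.
Proof.
by elim: es H st => [|e es IHes] H st //= const_st; apply/IHes/comp_const_merge_state.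
Qed.

(* Diamond lemma: two chains starting with distinct edges e and f are both
   continued through f |: (e |: H), where the two orders meet. *)
Lemma chain_state_unique (k : nat) H es es' st : (size es <= k)%N ->
  is_chain E H es -> is_chain E H es' -> chain_end H es = chain_end H es' ->
  comp_const H st.2 -> chain_state H es st = chain_state H es' st.
Proof.
elim: k H es es' st => [|k IHk] H es es' st le_es c c' same_end const_st;
  have size_eq : size es = size es' by rewrite (size_chain c) (size_chain c') same_end.
  by case: es es' le_es size_eq {c c' same_end} => [|? ?] [|? ?].
case: es es' le_es c c' same_end size_eq => [|e r] [|f r'] //= le_r.
move=> [mH eH cr] [_ fH cr'] same_end [size_r]; rewrite ltnS in le_r.
have const_e := comp_const_merge_state (e := e) const_st.
have const_f := comp_const_merge_state (e := f) const_st.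
have [eq_ef | ef] := eqVneq e f.
  by subst f; exact: IHk le_r cr cr' same_end const_e.
pose K := chain_end (e |: H) r.
have fK : f \in K by rewrite /K same_end chain_endE !inE eqxx.
have sGK : f |: (e |: H) \subset K by rewrite subUset sub1set fK /K chain_endE subsetUl.
have mK : multipath E K := chain_end_multipath cr.
have mG := multipath_subset mK sGK.
have [rest [c_rest end_rest]] := chain_exists mG mK sGK.
have swap : f |: (e |: H) = e |: (f |: H) by rewrite setUCA.
have chain_ef : is_chain E (e |: H) (f :: rest).
  by split=> //; [apply: chain_multipath cr | rewrite !inE negb_or eq_sym ef].
have chain_fe : is_chain E (f |: H) (e :: rest).
  by split; [apply: chain_multipath cr' | rewrite !inE negb_or ef | rewrite -swap].
have end_ef : chain_end (e |: H) r = chain_end (e |: H) (f :: rest) by rewrite /= end_rest.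
have end_fe : chain_end (f |: H) r' = chain_end (f |: H) (e :: rest).
  by rewrite /= -swap end_rest -same_end.
rewrite (IHk _ _ _ _ le_r cr chain_ef end_ef const_e).
rewrite (IHk _ _ _ _ _ cr' chain_fe end_fe const_f) -?size_r //.
by rewrite /= -swap (merge_state_comm mH mG eH fH ef const_st).
Qed.

Lemma represents_chain H es (x : Fobj tf H) st : is_chain E H es ->
  comp_const H st.2 -> represents x st -> represents (chain_comp es x) (chain_state H es st).
Proof.
elim: es H x st => [|e es IHes] H x st //= [mH eH c] const_st x_st.
apply: IHes => //; first exact: comp_const_merge_state.
by apply: represents_cover x_st; apply: cover_roots_neq mH (chain_multipath c) eH.
Qed.

Lemma chain_comp_linear H es : is_chain E H es -> is_linear (@chain_comp R A M tf n H es).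
Proof.
elim: es H => [|e es IHes] H /=; first by move=> _ r x y.
move=> [mH eH c]; apply: is_linear_comp (IHes _ c).
by have [] := cover_mapP tf (cover_roots_neq mH (chain_multipath c) eH).
Qed.

Definition cast_codom H K K' (p : K = K') (g : Fobj tf H -> Fobj tf K) :
  Fobj tf H -> Fobj tf K' := eq_rect K (fun K => Fobj tf H -> Fobj tf K) g K' p.

Definition is_chain_composite H K (g : Fobj tf H -> Fobj tf K) :=
  exists es (p : chain_end H es = K), is_chain E H es /\ g = cast_codom p (chain_comp es).

(* Arbitrary when no chain joins H to K. *)
Definition Fmap H K : Fobj tf H -> Fobj tf K :=
  epsilon (inhabits (fun _ => 0)) (@is_chain_composite H K).
Arguments Fmap : clear implicits.

Lemma FmapP H K es : is_chain E H es -> chain_end H es = K -> is_chain_composite (Fmap H K).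
Proof. by move=> c p; apply: epsilon_spec; exists (cast_codom p (chain_comp es)), es, p. Qed.

Lemma represents_Fmap H K es (x : Fobj tf H) st : is_chain E H es -> chain_end H es = K ->
  comp_const H st.2 -> represents x st -> represents (Fmap H K x) (chain_state H es st).
Proof.
move=> c p const_st x_st; have [es' [p' [c' ->]]] := FmapP c p.
rewrite -(@chain_state_unique (size es') H es' es) ?p ?p' //.
by case: K / p' {p}; apply: represents_chain.
Qed.

Lemma Fmap_linear H K es : is_chain E H es -> chain_end H es = K -> is_linear (Fmap H K).
Proof.
move=> c p; have [es' [p' [c' ->]]] := FmapP c p.
by case: K / p' {p}; apply: chain_comp_linear.
Qed.

Lemma Fmap_chain H es : is_chain E H es -> Fmap H (chain_end H es) =1 chain_comp es.
Proof.
move=> c; apply: tensor_linear_ext (Fmap_linear c erefl) (chain_comp_linear c) _ => m as_.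
have m_as := represents_pure tf m as_; have const := comp_const_pure m as_.
exact: represents_inj (represents_Fmap c erefl const m_as) (represents_chain c const m_as).
Qed.

Lemma Fmap_comp H1 H2 H3 : multipath E H1 -> multipath E H2 -> multipath E H3 ->
  H1 \subset H2 -> H2 \subset H3 -> Fmap H1 H3 =1 Fmap H2 H3 \o Fmap H1 H2.
Proof.
move=> m1 m2 m3 s12 s23.
have [es12 [c12 end12]] := chain_exists m1 m2 s12.
have [es23 [c23 end23]] := chain_exists m2 m3 s23.
subst H2 H3.
have c13 := chain_cat c12 c23; have end13 := chain_end_cat H1 es12 es23.
apply: tensor_linear_ext (Fmap_linear c13 end13) _ _ => [|m as_].
  exact: is_linear_comp (Fmap_linear c12 erefl) (Fmap_linear c23 erefl).
have m_as := represents_pure tf m as_; have const := comp_const_pure m as_.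
apply: represents_inj (represents_Fmap c13 end13 const m_as) _.
rewrite chain_state_cat; apply: represents_Fmap c23 erefl _ _.
  exact: comp_const_chain_state.
exact: represents_Fmap c12 erefl const m_as.
Qed.

End ChainMaps.

Arguments Fmap {R A M} tf {n} E H K.

Theorem proposition4p8 (n : nat) (E : {set 'I_n * 'I_n}) (HG : digraph E)
  (R : comNzRingType) (A : algType R) (M : bimodule A)
  (tf : forall k : nat, tensor_power (bm_car M) A k) :
  (* every H <= H' is joined by a chain of coverings *)
  (forall H H' : {set 'I_n * 'I_n}, multipath E H -> multipath E H' ->
     H \subset H' -> exists es, is_chain E H es /\ chain_end H es = H') /\
  exists Fmor : forall H H' : {set 'I_n * 'I_n}, Fobj tf H -> Fobj tf H',
    (* well defined: the composite along any chain is Fmor H H' *)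
    [/\ (forall H es, is_chain E H es ->
           Fmor H (chain_end H es) =1 @chain_comp R A M tf n H es),
        (* R-linear maps *)
        (forall H H', multipath E H -> multipath E H' -> H \subset H' ->
           is_linear (Fmor H H')),
        (* functor: identities *)
        (forall H, multipath E H -> Fmor H H =1 id) &
        (* functor: composition *)
        (forall H1 H2 H3, multipath E H1 -> multipath E H2 -> multipath E H3 ->
           H1 \subset H2 -> H2 \subset H3 ->
           Fmor H1 H3 =1 Fmor H2 H3 \o Fmor H1 H2)].
Proof.
split=> [H H' mH mH' sHH' | ]; first exact: chain_exists.
exists (Fmap tf E); split.
- exact: Fmap_chain.
- move=> H H' mH mH' sHH'; have [es [c <-]] := chain_exists mH mH' sHH'.
  exact: Fmap_linear c erefl.
- by move=> H mH; apply: (@Fmap_chain _ _ _ tf _ E H [::]).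
- exact: Fmap_comp.
Qed.
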